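(* Let $\beta>1$ and let $t\in[0,1)\setminus\mathcal U$. Then there exists a $\beta$-rational number $r\in\mathbb Q_{(\beta)}$ such that $t\in I_r^*=(r,r^* )$. Moreover both endpoints $r$ and $r^*$ of $I_r^*$ are bifurcation parameters (that is, $r\in\mathcal U$, and $r^*\in\mathcal U$ or $r^*=1$).
   Context: Let $\gamma=\beta-1$ if $\beta$ is an integer and $\gamma=\lfloor\beta\rfloor$ otherwise. $T_\beta(x)=\beta x-\lfloor\beta x\rfloor$ on $[0,1)$. The greedy $\beta$-expansion of $x\in[0,1)$ is $b(x,\beta)=(b_i)$ with $b_i=\lfloor\beta T_\beta^{i-1}(x)\rfloor$. The quasi-greedy $\beta$-expansion $\alpha(\beta)$ of $1$ is the lexicographically largest sequence in $\{0,\dots,\gamma\}^{\mathbb N}$, not eventually zero, with $1=\sum_i\alpha(\beta)_i\beta^{-i}$. $\sigma$ is the left shift, $\prec,\preceq$ the lexicographic order, and $\pi((x_i))=\sum_i x_i\beta^{-i}$. $\Sigma_\beta=\{\omega\in\{0,\dots,\gamma\}^{\mathbb N}\colon\sigma^k(\omega)\prec\alpha(\beta)\ \forall k\ge0\}$ (the set of greedy expansions). A number $r\in(0,1)$ is $\beta$-rational if $b(r,\beta)=r_1\cdots r_m0^\infty$ with $r_m\ne0$; $\mathbb Q_{(\beta)}$ is the set of such numbers. For such $r$ define $r^*$ as follows. If the periodic sequence $(r_1\cdots r_m)^\infty\in\Sigma_\beta$, then $r^*=\pi((r_1\cdots r_m)^\infty)$. Otherwise, if $r_1=\gamma$, set $r^*=\pi(\alpha(\beta))=1$;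 if $r_1<\gamma$, start from $x^{(0)}=(r_1\cdots r_m)^\infty$ and, as long as $x^{(i)}\notin\Sigma_\beta$, let $j=\min\{k\ge0\colon\sigma^k(x^{(i)})\succeq\alpha(\beta)\}$ (one has $j\ge1$) and set $x^{(i+1)}=x^{(i)}_1\cdots x^{(i)}_{j-1}(x^{(i)}_j+1)0^\infty$; this terminates after finitely many steps at a sequence $\tilde r'\in\Sigma_\beta$, and $r^*=\pi(\tilde r')$. Put $I_r^*=(r,r^* )$. For $0<t<1$ let $K(t)=\{x\in[0,1)\colon T_\beta^k(x)\notin(0,t)\ \forall k\ge0\}$, $K(0)=[0,1)$, $K(1)=\{0\}$. A parameter $t\in[0,1]$ is a bifurcation parameter if $t\in\{0,1\}$, or $0<t<1$ and for every $\delta>0$ there is $t'\in(t-\delta,t+\delta)$ with $K(t')\ne K(t)$; $\mathcal U$ is the set of bifurcation parameters in $[0,1)$. *)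

From Stdlib Require Import Reals Lra Lia ZArith Arith.
From Coquelicot Require Import Coquelicot.
Open Scope R_scope.

(* Sequences are indexed from 0: w 0 is the first digit (w_1 in the paper). *)
Definition digseq := nat -> nat.

Definition flr (x : R) : Z := Int_part x.

Definition gamma (beta : R) : nat :=
  if Req_EM_T beta (IZR (flr beta)) then (Z.to_nat (flr beta) - 1)%nat
  else Z.to_nat (flr beta).

Definition Tb (beta x : R) : R := beta * x - IZR (flr (beta * x)).

Definition greedy (beta x : R) : digseq :=
  fun i => Z.to_nat (flr (beta * Nat.iter i (Tb beta) x)).

Definition piv (beta : R) (w : digseq) : R :=
  Series (fun i => INR (w i) / beta ^ (S i)).

Definition shift (k : nat) (w : digseq) : digseq := fun i => w (i + k)%nat.

Definition lex_lt (x y : digseq) : Prop :=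
  exists n, (forall k, (k < n)%nat -> x k = y k) /\ (x n < y n)%nat.
Definition lex_le (x y : digseq) : Prop := lex_lt x y \/ x = y.

(* admissible candidates for the quasi-greedy expansion of 1 *)
Definition qg_candidate (beta : R) (w : digseq) : Prop :=
  (forall i, (w i <= gamma beta)%nat) /\
  (forall N, exists n, (N <= n)%nat /\ w n <> 0%nat) /\
  is_series (fun i => INR (w i) / beta ^ (S i)) 1.

Definition is_alpha (beta : R) (a : digseq) : Prop :=
  qg_candidate beta a /\ forall w, qg_candidate beta w -> lex_le w a.

Definition Sigma (beta : R) (a : digseq) (w : digseq) : Prop :=
  (forall i, (w i <= gamma beta)%nat) /\ forall k, lex_lt (shift k w) a.

Definition brat_len (beta r : R) (m : nat) : Prop :=
  0 < r < 1 /\ (1 <= m)%nat /\ greedy beta r (m - 1)%nat <> 0%nat /\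
  forall i, (m <= i)%nat -> greedy beta r i = 0%nat.

Definition beta_rational (beta r : R) : Prop := exists m, brat_len beta r m.

(* x' = x_1 ... x_{j-1} (x_j + 1) 0^oo   (paper's 1-indexed j) *)
Definition bump (x : digseq) (j : nat) : digseq :=
  fun i => if (i <? j - 1)%nat then x i
           else if (i =? j - 1)%nat then S (x i) else 0%nat.

Definition rstep (beta : R) (a : digseq) (x x' : digseq) : Prop :=
  ~ Sigma beta a x /\
  exists j, (1 <= j)%nat /\ lex_le a (shift j x) /\
    (forall k, (k < j)%nat -> ~ lex_le a (shift k x)) /\
    x' = bump x j.

Inductive rproc (beta : R) (a : digseq) : digseq -> digseq -> Prop :=
| rproc_done x : Sigma beta a x -> rproc beta a x x
| rproc_step x x' y : rstep beta a x x' -> rproc beta a x' y -> rproc beta a x y.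

Definition is_rstar (beta : R) (a : digseq) (r s : R) : Prop :=
  exists m, brat_len beta r m /\
  let per := fun i => greedy beta r (i mod m) in
  (Sigma beta a per /\ s = piv beta per) \/
  (~ Sigma beta a per /\ greedy beta r 0%nat = gamma beta /\ s = 1) \/
  (~ Sigma beta a per /\ (greedy beta r 0%nat < gamma beta)%nat /\
     exists y, rproc beta a per y /\ s = piv beta y).

Definition Kset (beta t x : R) : Prop :=
  (t = 0 /\ 0 <= x < 1) \/
  (t = 1 /\ x = 0) \/
  (0 < t < 1 /\ 0 <= x < 1 /\
     forall k, ~ (0 < Nat.iter k (Tb beta) x < t)).

Definition bifurcation (beta t : R) : Prop :=
  t = 0 \/ t = 1 \/
  (0 < t < 1 /\ forall delta, 0 < delta ->
     exists t', 0 <= t' <= 1 /\ Rabs (t' - t) < delta /\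
       ~ (forall x, Kset beta t' x <-> Kset beta t x)).

Definition Ubif (beta t : R) : Prop := 0 <= t < 1 /\ bifurcation beta t.

(* Let E be the set of x in (0,1) whose orbit avoids (0, x), i.e. x lies in K(x).  Every
   point of E is a bifurcation parameter, since K(t') loses x as soon as t' > x.  For t not
   in U, let r be the supremum of E below t.  Since T^k is affine on a left neighbourhood of
   r, r lies in E, so r < t.  If the orbit of r never hit 0, moving r to the right up to the
   first point whose orbit hits a discontinuity of T would give a point of E in (r, t);
   hence r is beta-rational.  Its greedy expansion is lexicographically below its nonzero
   shifts, so its periodisation is too, and every step of the procedure defining r^*
   preserves this while increasing the sequence; since the result lies in Sigma_beta, r^*
   is 1 or the value of a sequence with these properties, which lies in E, above r and
   hence above t. *)

From Stdlib Require Import Reals Lra Lia ZArith Arith Classical FunctionalExtensionality.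
From Coquelicot Require Import Coquelicot.
Open Scope R_scope.

Lemma IZR_abs_lt_1 (k : Z) : -1 < IZR k < 1 -> k = 0%Z.
Proof. intros [H1 H2]. apply lt_IZR in H1. apply lt_IZR in H2. lia. Qed.

Lemma flr_spec y : IZR (flr y) <= y < IZR (flr y) + 1.
Proof. unfold flr. destruct (base_Int_part y). lra. Qed.

Lemma flr_unique (z : Z) y : IZR z <= y < IZR z + 1 -> flr y = z.
Proof.
  intros Hz. destruct (flr_spec y).
  assert (Hd : (flr y - z)%Z = 0%Z) by (apply IZR_abs_lt_1; rewrite minus_IZR; lra).
  lia.
Qed.

Lemma flr_IZR (z : Z) : flr (IZR z) = z.
Proof. apply flr_unique. lra. Qed.

Lemma flr_nonneg y : 0 <= y -> (0 <= flr y)%Z.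
Proof.
  intros Hy. destruct (flr_spec y) as [_ H].
  assert (H1 : IZR (-1) < IZR (flr y)) by lra. apply lt_IZR in H1. lia.
Qed.

(* [ceil z - 1], the digit rule of quasi-greedy expansions. *)
Definition ceil_pred (z : R) : Z := (- up (- z))%Z.

Lemma ceil_pred_spec z : IZR (ceil_pred z) < z <= IZR (ceil_pred z) + 1.
Proof. unfold ceil_pred. rewrite opp_IZR. destruct (archimed (- z)). lra. Qed.

Lemma ceil_pred_unique (d : Z) z : IZR d < z <= IZR d + 1 -> ceil_pred z = d.
Proof.
  intros Hd. destruct (ceil_pred_spec z).
  assert (Hk : (ceil_pred z - d)%Z = 0%Z) by (apply IZR_abs_lt_1; rewrite minus_IZR; lra).
  lia.
Qed.

Lemma ceil_pred_le z1 z2 : z1 <= z2 -> (ceil_pred z1 <= ceil_pred z2)%Z.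
Proof.
  intros H. destruct (ceil_pred_spec z1), (ceil_pred_spec z2).
  assert (Hlt : IZR (ceil_pred z1) < IZR (ceil_pred z2 + 1)) by (rewrite plus_IZR; lra).
  apply lt_IZR in Hlt. lia.
Qed.

Lemma ceil_pred_nonneg z : 0 < z -> (0 <= ceil_pred z)%Z.
Proof.
  intros H. destruct (ceil_pred_spec z).
  assert (Hm : IZR (-1) < IZR (ceil_pred z)) by lra. apply lt_IZR in Hm. lia.
Qed.

Lemma argmin_nat (g : nat -> R) N : exists n, (n <= N)%nat /\
  (forall k, (k <= N)%nat -> g n <= g k) /\ (forall k, (k < n)%nat -> g n < g k).
Proof.
  induction N as [|N [n [Hn [Hle Hlt]]]].
  - exists 0%nat. split; [lia|]. split; [|lia].
    intros k Hk. replace k with 0%nat by lia. lra.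
  - destruct (Rlt_dec (g (S N)) (g n)) as [L|L].
    + exists (S N). split; [lia|]. split.
      * intros k Hk. destruct (Nat.eq_dec k (S N)) as [->|]; [lra|].
        specialize (Hle k ltac:(lia)). lra.
      * intros k Hk. specialize (Hle k ltac:(lia)). lra.
    + exists n. split; [lia|]. split; [|exact Hlt].
      intros k Hk. destruct (Nat.eq_dec k (S N)) as [->|]; [lra|]. apply Hle. lia.
Qed.

Lemma exists_least (P : nat -> Prop) :
  (exists n, P n) -> exists n, P n /\ forall k, (k < n)%nat -> ~ P k.
Proof.
  intros [n Hn]. induction n as [n IH] using (well_founded_induction lt_wf).
  destruct (classic (exists k, (k < n)%nat /\ P k)) as [[k [Hk Pk]]|Hno].
  - exact (IH k Hk Pk).
  - exists n. split; [exact Hn|]. intros k Hk Pk. apply Hno. eauto.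
Qed.

(** * Digit sequences *)

Lemma shift_shift n k w : shift n (shift k w) = shift (n + k) w.
Proof. apply functional_extensionality. intros i. unfold shift. f_equal. lia. Qed.

Lemma shift_0 w : shift 0 w = w.
Proof. apply functional_extensionality. intros i. unfold shift. f_equal. lia. Qed.

Lemma lex_lt_irrefl x : ~ lex_lt x x.
Proof. intros [n [_ H]]. lia. Qed.

Lemma lex_lt_trans x y z : lex_lt x y -> lex_lt y z -> lex_lt x z.
Proof.
  intros [n [Hn Ln]] [m [Hm Lm]].
  exists (Nat.min n m). split.
  - intros k Hk. rewrite Hn, Hm by lia. reflexivity.
  - destruct (lt_eq_lt_dec n m) as [[H|<-]|H].
    + rewrite Nat.min_l, <- (Hm n) by lia. exact Ln.
    + rewrite Nat.min_id. lia.
    + rewrite Nat.min_r, (Hn m) by lia. exact Lm.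
Qed.

Lemma lex_le_lt_trans x y z : lex_le x y -> lex_lt y z -> lex_lt x z.
Proof. intros [H|<-] H'; [exact (lex_lt_trans _ _ _ H H')|exact H']. Qed.

Lemma lex_lt_le_trans x y z : lex_lt x y -> lex_le y z -> lex_lt x z.
Proof. intros H [H'|<-]; [exact (lex_lt_trans _ _ _ H H')|exact H]. Qed.

Lemma lex_lt_not_le x y : lex_lt x y -> ~ lex_le y x.
Proof. intros H H'. exact (lex_lt_irrefl x (lex_lt_le_trans _ _ _ H H')). Qed.

Lemma lex_trichotomy x y : lex_lt x y \/ x = y \/ lex_lt y x.
Proof.
  destruct (classic (exists n, x n <> y n)) as [Hne|Heq].
  - destruct (exists_least _ Hne) as [n [Hn Hmin]].
    assert (Hpre : forall k, (k < n)%nat -> x k = y k).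
    { intros k Hk. apply NNPP. exact (Hmin k Hk). }
    destruct (lt_eq_lt_dec (x n) (y n)) as [[H|H]|H].
    + left. exists n. auto.
    + contradiction.
    + right; right. exists n. split; [|exact H]. intros k Hk. symmetry. auto.
  - right; left. apply functional_extensionality. intros n.
    apply NNPP. intros H. apply Heq. eauto.
Qed.

Lemma lex_lt_of_not_le x y : ~ lex_le y x -> lex_lt x y.
Proof.
  intros H. destruct (lex_trichotomy x y) as [H1|[H1|H1]]; [exact H1| |];
    exfalso; apply H; [right|left]; auto.
Qed.

Lemma lex_le_of_not_lt x y : ~ lex_lt x y -> lex_le y x.
Proof.
  intros H. destruct (lex_trichotomy x y) as [H1|[H1|H1]];
    [contradiction|right; auto|left; exact H1].
Qed.

Lemma lex_lt_nonzero x y : lex_lt x y -> exists i, y i <> 0%nat.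
Proof. intros [n [_ Ln]]. exists n. lia. Qed.

Lemma lex_le_nonzero x y : lex_le x y -> (exists i, x i <> 0%nat) -> exists i, y i <> 0%nat.
Proof. intros [H|<-] Hx; [exact (lex_lt_nonzero _ _ H)|exact Hx]. Qed.

Definition lex_le_shifts (x : digseq) : Prop :=
  forall k, lex_le x (shift k x) \/ forall i, x (i + k)%nat = 0%nat.

Definition periodize (m : nat) (b : digseq) : digseq := fun i => b (i mod m)%nat.

Lemma bump_before x j i : (i < j - 1)%nat -> bump x j i = x i.
Proof. intros H. unfold bump. destruct (Nat.ltb_spec i (j - 1)); [reflexivity|lia]. Qed.

Lemma bump_at x j : (1 <= j)%nat -> bump x j (j - 1)%nat = S (x (j - 1)%nat).
Proof.
  intros H. unfold bump. destruct (Nat.ltb_spec (j - 1) (j - 1)); [lia|].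
  rewrite Nat.eqb_refl. reflexivity.
Qed.

Lemma bump_after x j i : (1 <= j)%nat -> (j <= i)%nat -> bump x j i = 0%nat.
Proof.
  intros H1 H2. unfold bump. destruct (Nat.ltb_spec i (j - 1)); [lia|].
  destruct (Nat.eqb_spec i (j - 1)); [lia|reflexivity].
Qed.

Lemma lex_lt_bump x j : (1 <= j)%nat -> lex_lt x (bump x j).
Proof.
  intros H. exists (j - 1)%nat. split.
  - intros k Hk. rewrite bump_before; auto.
  - rewrite bump_at; auto.
Qed.

Lemma lex_le_shifts_bump x j : lex_le_shifts x -> (1 <= j)%nat ->
  (exists i, x (i + j)%nat <> 0%nat) -> lex_le_shifts (bump x j).
Proof.
  intros Hx Hj [i0 Hi0] k.
  destruct (Nat.eq_dec k 0) as [->|Hk0]; [left; right; symmetry; apply shift_0|].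
  destruct (le_lt_dec j k) as [Hjk|Hkj]; [right; intros i; apply bump_after; lia|].
  left; left. unfold shift.
  destruct (Hx k) as [[[n [Hn Ln]]|E]|Z].
  - unfold shift in Hn, Ln.
    destruct (lt_dec (n + k) (j - 1)) as [Hnk|Hnk].
    + exists n. split.
      * intros i Hi. rewrite !bump_before by lia. apply Hn; auto.
      * rewrite !bump_before by lia. exact Ln.
    + exists (j - 1 - k)%nat. split.
      * intros i Hi. rewrite !bump_before by lia. apply Hn. lia.
      * replace (j - 1 - k + k)%nat with (j - 1)%nat by lia.
        rewrite bump_at, bump_before by lia.
        destruct (Nat.eq_dec (j - 1 - k) n) as [En|En].
        -- subst n. replace (j - 1)%nat with (j - 1 - k + k)%nat at 2 by lia. lia.
        -- rewrite (Hn (j - 1 - k)%nat) by lia.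
           replace (j - 1 - k + k)%nat with (j - 1)%nat by lia. lia.
  - assert (Ex : forall i, x i = x (i + k)%nat).
    { intros i. change (x (i + k)%nat) with (shift k x i). rewrite <- E. reflexivity. }
    exists (j - 1 - k)%nat. split.
    + intros i Hi. rewrite !bump_before by lia. apply Ex.
    + replace (j - 1 - k + k)%nat with (j - 1)%nat by lia.
      rewrite bump_at, bump_before, Ex by lia.
      replace (j - 1 - k + k)%nat with (j - 1)%nat by lia. lia.
  - exfalso. apply Hi0. specialize (Z (i0 + j - k)%nat).
    replace (i0 + j - k + k)%nat with (i0 + j)%nat in Z by lia. exact Z.
Qed.

Section Periodize.

Variables (m : nat) (b : digseq).
Hypotheses (m_pos : (1 <= m)%nat) (b_last : b (m - 1)%nat <> 0%nat)
  (b_tail : forall i, (m <= i)%nat -> b i = 0%nat).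

Lemma lex_le_shifts_periodize : lex_le_shifts b -> lex_le_shifts (periodize m b).
Proof.
  intros Hb k. left.
  set (k' := (k mod m)%nat).
  assert (Hk' : (k' < m)%nat) by (apply Nat.mod_upper_bound; lia).
  replace (shift k (periodize m b)) with (shift k' (periodize m b)).
  2:{ apply functional_extensionality. intros i. unfold shift, periodize, k'.
      rewrite Nat.Div0.add_mod_idemp_r. reflexivity. }
  destruct (Nat.eq_dec k' 0) as [->|Hk0]; [right; symmetry; apply shift_0|].
  left. unfold shift, periodize. destruct (Hb k') as [[[n [Hn Ln]]|E]|Z].
  - unfold shift in Hn, Ln.
    assert (Hnk : (n + k' < m)%nat).
    { destruct (lt_dec (n + k') m); [assumption|].
      rewrite (b_tail (n + k')%nat) in Ln by lia. lia. }
    exists n. split.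
    + intros i Hi. rewrite !Nat.mod_small by lia. apply Hn. exact Hi.
    + rewrite !Nat.mod_small by lia. exact Ln.
  - exfalso. apply b_last.
    assert (Hper : b (m - 1 + k')%nat = b (m - 1)%nat).
    { change (b (m - 1 + k')%nat) with (shift k' b (m - 1)%nat). rewrite <- E. reflexivity. }
    rewrite <- Hper. apply b_tail. lia.
  - exfalso. apply b_last. specialize (Z (m - 1 - k')%nat).
    replace (m - 1 - k' + k')%nat with (m - 1)%nat in Z by lia. exact Z.
Qed.

(* The first difference is at [m + i0], with [i0] the first nonzero digit of [b]. *)
Lemma lex_lt_periodize : lex_lt b (periodize m b).
Proof.
  destruct (exists_least (fun i => b i <> 0%nat)) as [i0 [Hi0 Hmin]]; [eauto|].
  assert (Hi0m : (i0 < m)%nat).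
  { destruct (lt_dec i0 m); [assumption|]. exfalso. apply Hi0, b_tail. lia. }
  unfold periodize. exists (m + i0)%nat. split.
  - intros i Hi. destruct (lt_dec i m) as [L|L]; [rewrite Nat.mod_small; auto|].
    rewrite b_tail by lia. replace i with ((i - m) + 1 * m)%nat by lia.
    rewrite Nat.Div0.mod_add, Nat.mod_small by lia.
    destruct (Nat.eq_dec (b (i - m)%nat) 0) as [->|Hne]; [reflexivity|].
    exfalso. exact (Hmin (i - m)%nat ltac:(lia) Hne).
  - rewrite b_tail by lia. replace (m + i0)%nat with (i0 + 1 * m)%nat by lia.
    rewrite Nat.Div0.mod_add, Nat.mod_small by lia. lia.
Qed.

End Periodize.

Definition bounded_by (B : nat) (w : digseq) : Prop := forall i, (w i <= B)%nat.

Lemma bounded_by_shift B k w : bounded_by B w -> bounded_by B (shift k w).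
Proof. intros H i. apply H. Qed.

Section BetaExpansions.

Variable beta : R.
Hypothesis beta_gt_1 : 1 < beta.

Lemma beta_pow_pos n : 0 < beta ^ n.
Proof. apply pow_lt. lra. Qed.

Lemma beta_pow_ge_1 n : 1 <= beta ^ n.
Proof. apply pow_R1_Rle. lra. Qed.

Lemma inv_beta_lt_1 : / beta < 1.
Proof. rewrite <- Rinv_1. apply Rinv_lt_contravar; lra. Qed.

Lemma inv_beta_pow_small eps : 0 < eps -> exists N, / beta ^ N < eps.
Proof.
  intros He. assert (Hi := inv_beta_lt_1).
  assert (Hi0 : 0 < / beta) by (apply Rinv_0_lt_compat; lra).
  destruct (pow_lt_1_zero (/ beta)) with (y := eps) as [N HN];
    [rewrite Rabs_pos_eq; lra|exact He|].
  exists N. specialize (HN N (le_n _)). rewrite Rabs_pos_eq in HN by (apply pow_le; lra).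
  rewrite pow_inv in HN. exact HN.
Qed.

Lemma eq_0_of_le_inv_pow D K : (forall N, Rabs D <= K / beta ^ N) -> D = 0.
Proof.
  intros H. destruct (Req_dec D 0) as [E|E]; [exact E|exfalso].
  assert (HD : 0 < Rabs D) by (apply Rabs_pos_lt; exact E).
  assert (HK : 0 < K) by (specialize (H 0%nat); simpl in H; lra).
  destruct (inv_beta_pow_small (Rabs D / K)) as [N HN]; [apply Rdiv_lt_0_compat; lra|].
  specialize (H N). assert (HN' := beta_pow_pos N).
  apply (Rmult_lt_compat_l K) in HN; [|exact HK].
  replace (K * (Rabs D / K)) with (Rabs D) in HN by (field; lra).
  unfold Rdiv in H. lra.
Qed.

Lemma gamma_spec : INR (gamma beta) < beta /\ beta <= INR (gamma beta) + 1 /\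
  forall n, INR n < beta -> (n <= gamma beta)%nat.
Proof.
  unfold gamma. destruct (flr_spec beta) as [F1 F2].
  assert (HF : (1 <= flr beta)%Z).
  { assert (H0 : IZR 0 < IZR (flr beta)) by lra. apply lt_IZR in H0. lia. }
  destruct (Req_EM_T beta (IZR (flr beta))) as [E|E]; rewrite INR_IZR_INZ.
  - rewrite Nat2Z.inj_sub, Z2Nat.id, minus_IZR by lia. simpl.
    split; [lra|split; [lra|]].
    intros n Hn. rewrite INR_IZR_INZ, E in Hn. apply lt_IZR in Hn. lia.
  - rewrite Z2Nat.id by lia. split; [lra|split; [lra|]].
    intros n Hn. rewrite INR_IZR_INZ in Hn.
    assert (Hlt : IZR (Z.of_nat n) < IZR (flr beta + 1)) by (rewrite plus_IZR; simpl; lra).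
    apply lt_IZR in Hlt. lia.
Qed.

(** * The beta-transformation and greedy expansions *)

Lemma Tb_range x : 0 <= Tb beta x < 1.
Proof. unfold Tb. destruct (flr_spec (beta * x)). lra. Qed.

Lemma Tb_decomp x : beta * x = IZR (flr (beta * x)) + Tb beta x.
Proof. unfold Tb. ring. Qed.

Lemma iter_Tb_0 k : Nat.iter k (Tb beta) 0 = 0.
Proof.
  induction k as [|k IH]; [reflexivity|]. simpl. rewrite IH. unfold Tb.
  rewrite Rmult_0_r. change 0 with (IZR 0). rewrite flr_IZR. simpl. ring.
Qed.

Lemma iter_Tb_range k x : 0 <= x < 1 -> 0 <= Nat.iter k (Tb beta) x < 1.
Proof. destruct k; [auto|intros; apply Tb_range]. Qed.

Lemma iter_Tb_zero_after k n x : (k <= n)%nat -> Nat.iter k (Tb beta) x = 0 ->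
  Nat.iter n (Tb beta) x = 0.
Proof.
  intros Hk H. replace n with ((n - k) + k)%nat by lia.
  rewrite Nat.iter_add, H. apply iter_Tb_0.
Qed.

Lemma iter_Tb_affine x d n :
  (forall k, (1 <= k <= n)%nat -> 0 <= Nat.iter k (Tb beta) x + beta ^ k * d < 1) ->
  Nat.iter n (Tb beta) (x + d) = Nat.iter n (Tb beta) x + beta ^ n * d.
Proof.
  induction n as [|n IH]; intros H; [simpl; ring|].
  rewrite !Nat.iter_succ, IH by (intros k Hk; apply H; lia).
  set (y := Nat.iter n (Tb beta) x).
  assert (Hn := H (S n) ltac:(lia)). rewrite Nat.iter_succ in Hn. fold y in Hn.
  assert (Hy := Tb_decomp y).
  assert (Hf : flr (beta * (y + beta ^ n * d)) = flr (beta * y)).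
  { apply flr_unique. simpl in Hn. nra. }
  unfold Tb at 1. rewrite Hf. simpl. unfold Tb in Hy |- *. lra.
Qed.

Lemma iter_Tb_hit_zero x d n : 0 <= x < 1 -> 0 <= d -> (1 <= n)%nat ->
  (forall k, (k < n)%nat -> Nat.iter k (Tb beta) x + beta ^ k * d < 1) ->
  Nat.iter n (Tb beta) x + beta ^ n * d = 1 ->
  (forall k, (k < n)%nat ->
     Nat.iter k (Tb beta) (x + d) = Nat.iter k (Tb beta) x + beta ^ k * d) /\
  Nat.iter n (Tb beta) (x + d) = 0.
Proof.
  intros Hx Hd Hn Hbelow Hone.
  assert (Horbit : forall k, (k < n)%nat ->
    Nat.iter k (Tb beta) (x + d) = Nat.iter k (Tb beta) x + beta ^ k * d).
  { intros k Hk. apply iter_Tb_affine. intros i Hi.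
    assert (Hi0 := iter_Tb_range i x Hx).
    assert (Hp := beta_pow_pos i). split; [nra|]. apply Hbelow. lia. }
  split; [exact Horbit|].
  destruct n as [|n]; [lia|]. rewrite Nat.iter_succ, Horbit by lia.
  set (y := Nat.iter n (Tb beta) x). rewrite Nat.iter_succ in Hone. fold y in Hone.
  assert (Hy : beta * (y + beta ^ n * d) = IZR (flr (beta * y) + 1)).
  { rewrite plus_IZR. assert (Hdec := Tb_decomp y). simpl in Hone. lra. }
  unfold Tb at 1. rewrite Hy, flr_IZR. ring.
Qed.

Lemma INR_digit y : 0 <= y -> INR (Z.to_nat (flr (beta * y))) = IZR (flr (beta * y)).
Proof.
  intros Hy. rewrite INR_IZR_INZ, Z2Nat.id; [reflexivity|].
  apply flr_nonneg. apply Rmult_le_pos; lra.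
Qed.

Lemma digit_le_gamma y : 0 <= y < 1 -> (Z.to_nat (flr (beta * y)) <= gamma beta)%nat.
Proof.
  intros Hy. destruct gamma_spec as [_ [_ G]]. apply G.
  rewrite INR_digit by lra. destruct (flr_spec (beta * y)). nra.
Qed.

(** * The value map [piv] *)

Lemma ex_series_piv B w : bounded_by B w -> ex_series (fun i => INR (w i) / beta ^ S i).
Proof.
  intros Hw.
  assert (Hi := inv_beta_lt_1). assert (Hi0 : 0 < / beta) by (apply Rinv_0_lt_compat; lra).
  apply (@ex_series_le R_AbsRing R_CompleteNormedModule _ (fun n => INR B * (/ beta) ^ n)).
  - intros n. unfold norm; simpl.
    assert (Hp := beta_pow_pos n). assert (HwB : INR (w n) <= INR B) by apply le_INR, Hw.
    assert (Hw0 := pos_INR (w n)).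
    assert (Hterm : INR (w n) / (beta * beta ^ n) = INR (w n) * / beta * (/ beta) ^ n).
    { rewrite pow_inv. field. lra. }
    rewrite Hterm, Rabs_pos_eq by (apply Rmult_le_pos; [nra|apply pow_le; lra]).
    apply Rmult_le_compat_r; [apply pow_le; lra|nra].
  - apply (ex_series_scal_l (V := R_NormedModule)). apply ex_series_geom.
    rewrite Rabs_pos_eq; lra.
Qed.

Lemma piv_cons B w : bounded_by B w ->
  piv beta w = (INR (w 0%nat) + piv beta (shift 1 w)) / beta.
Proof.
  intros Hw. unfold piv. rewrite Series_incr_1 by exact (ex_series_piv B w Hw).
  replace (Series (fun k => INR (w (S k)) / beta ^ S (S k)))
    with (/ beta * Series (fun i => INR (shift 1 w i) / beta ^ S i)).
  - simpl. field. lra.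
  - rewrite <- Series_scal_l. apply Series_ext. intros n. unfold shift.
    rewrite Nat.add_1_r. simpl. field. split; [apply Rgt_not_eq, beta_pow_pos|lra].
Qed.

Lemma piv_zero w : (forall i, w i = 0%nat) -> piv beta w = 0.
Proof.
  intros H. unfold piv. rewrite (Series_ext _ (fun _ => 0 * 1)).
  - rewrite Series_scal_l. ring.
  - intros n. rewrite H. simpl. unfold Rdiv. ring.
Qed.

Lemma piv_le B w w' : bounded_by B w' -> (forall i, (w i <= w' i)%nat) ->
  piv beta w <= piv beta w'.
Proof.
  intros Hw' Hle. unfold piv. apply Series_le; [|exact (ex_series_piv B w' Hw')].
  intros n. assert (Hp := Rinv_0_lt_compat _ (beta_pow_pos (S n))). split.
  - apply Rmult_le_pos; [apply pos_INR|lra].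
  - apply Rmult_le_compat_r; [lra|apply le_INR, Hle].
Qed.

Lemma piv_nonneg B w : bounded_by B w -> 0 <= piv beta w.
Proof.
  intros Hw. rewrite <- (piv_zero (fun _ => 0%nat)) by reflexivity.
  apply (piv_le B); [exact Hw|lia].
Qed.

Lemma piv_pos B w i : bounded_by B w -> w i <> 0%nat -> 0 < piv beta w.
Proof.
  revert w. induction i as [|i IH]; intros w Hw Hi;
    rewrite (piv_cons B w) by exact Hw; apply Rdiv_lt_0_compat; try lra.
  - assert (H0 : 0 < INR (w 0%nat)) by (apply lt_0_INR; lia).
    assert (H1 := piv_nonneg B (shift 1 w) (bounded_by_shift _ _ _ Hw)). lra.
  - assert (H0 := pos_INR (w 0%nat)).
    assert (H1 : 0 < piv beta (shift 1 w)).
    { apply (IH _ (bounded_by_shift _ _ _ Hw)). unfold shift. rewrite Nat.add_1_r. exact Hi. }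
    lra.
Qed.

Lemma piv_tail_pos B w n : bounded_by B w -> (forall N, exists k, (N <= k)%nat /\ w k <> 0%nat) ->
  0 < piv beta (shift n w).
Proof.
  intros Hw Hnz. destruct (Hnz n) as [k [Hk Hwk]].
  apply (piv_pos B _ (k - n)); [exact (bounded_by_shift _ _ _ Hw)|].
  unfold shift. replace (k - n + n)%nat with k by lia. exact Hwk.
Qed.

Lemma piv_diff_prefix B n u v : bounded_by B u -> bounded_by B v ->
  (forall i, (i < n)%nat -> u i = v i) ->
  piv beta u - piv beta v = (piv beta (shift n u) - piv beta (shift n v)) / beta ^ n.
Proof.
  revert u v. induction n as [|n IH]; intros u v Hu Hv Heq.
  - rewrite !shift_0. simpl. field.
  - rewrite (piv_cons B u), (piv_cons B v), (Heq 0%nat) by (auto; lia).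
    assert (E := IH (shift 1 u) (shift 1 v) (bounded_by_shift _ _ _ Hu)
                   (bounded_by_shift _ _ _ Hv)).
    rewrite !shift_shift, Nat.add_1_r in E.
    assert (Hp := beta_pow_pos n).
    replace ((INR (v 0%nat) + piv beta (shift 1 u)) / beta -
             (INR (v 0%nat) + piv beta (shift 1 v)) / beta)
      with ((piv beta (shift 1 u) - piv beta (shift 1 v)) / beta) by (field; lra).
    rewrite E by (intros i Hi; unfold shift; apply Heq; lia). simpl. field. lra.
Qed.

Lemma piv_shift_eq_remainder B (rho : nat -> R) w : bounded_by B w ->
  (forall n, 0 <= rho n <= 1) -> (forall n, beta * rho n = INR (w n) + rho (S n)) ->
  forall n, piv beta (shift n w) = rho n.
Proof.
  intros Hw Hr Hs n.
  set (C := piv beta (fun _ => B)).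
  assert (HC : forall k, 0 <= piv beta (shift k w) <= C).
  { intros k. split; [exact (piv_nonneg B _ (bounded_by_shift _ _ _ Hw))|].
    apply (piv_le B); intros i; [lia|apply Hw]. }
  assert (Hdiff : forall k, piv beta (shift n w) - rho n =
     (piv beta (shift (k + n) w) - rho (k + n)%nat) / beta ^ k).
  { induction k as [|k IH]; [simpl; field|].
    rewrite IH, (piv_cons B (shift (k + n) w)), shift_shift
      by exact (bounded_by_shift _ _ _ Hw).
    assert (Hk := Hs (k + n)%nat). unfold shift at 1. simpl.
    replace (rho (k + n)%nat) with ((INR (w (k + n)%nat) + rho (S (k + n))) / beta)
      by (apply (Rmult_eq_reg_l beta); [rewrite Hk; field|]; lra).
    replace (0 + (k + n))%nat with (k + n)%nat by lia.
    field. split; [apply Rgt_not_eq, beta_pow_pos|lra]. }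
  enough (piv beta (shift n w) - rho n = 0) by lra.
  apply (eq_0_of_le_inv_pow _ (C + 1)). intros N. rewrite (Hdiff N).
  unfold Rdiv. rewrite Rabs_mult, (Rabs_pos_eq (/ _))
    by (left; apply Rinv_0_lt_compat, beta_pow_pos).
  apply Rmult_le_compat_r; [left; apply Rinv_0_lt_compat, beta_pow_pos|].
  specialize (HC (N + n)%nat). specialize (Hr (N + n)%nat). apply Rabs_le. lra.
Qed.

Lemma piv_lt_of_first_diff B w w' n : bounded_by B w -> bounded_by B w' ->
  (forall i, (i < n)%nat -> w i = w' i) -> (w n < w' n)%nat ->
  piv beta (shift (S n) w) < 1 -> piv beta w < piv beta w'.
Proof.
  intros Hw Hw' Heq Hlt H1.
  assert (P := piv_diff_prefix B n w w' Hw Hw' Heq).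
  rewrite (piv_cons B (shift n w)), (piv_cons B (shift n w')), !shift_shift in P
    by (apply bounded_by_shift; assumption).
  unfold shift at 1 3 in P. simpl in P.
  assert (H0 := piv_nonneg B _ (bounded_by_shift _ (S n) _ Hw')).
  assert (Hd : INR (w n) + 1 <= INR (w' n)) by (rewrite <- S_INR; apply le_INR; lia).
  assert (Hp := beta_pow_pos n).
  enough (((INR (w n) + piv beta (shift (S n) w)) / beta -
    (INR (w' n) + piv beta (shift (S n) w')) / beta) / beta ^ n < 0) by lra.
  apply Rdiv_neg_pos; [|exact Hp].
  unfold Rdiv. rewrite <- Rmult_minus_distr_r.
  apply Rmult_neg_pos; [lra|apply Rinv_0_lt_compat; lra].
Qed.

Lemma shift_greedy k x : shift k (greedy beta x) = greedy beta (Nat.iter k (Tb beta) x).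
Proof.
  apply functional_extensionality. intros i. unfold shift, greedy.
  rewrite Nat.iter_add. reflexivity.
Qed.

Lemma greedy_bounded x : 0 <= x < 1 -> bounded_by (gamma beta) (greedy beta x).
Proof. intros Hx i. apply digit_le_gamma, iter_Tb_range, Hx. Qed.

Lemma piv_shift_greedy x n : 0 <= x < 1 ->
  piv beta (shift n (greedy beta x)) = Nat.iter n (Tb beta) x.
Proof.
  intros Hx. apply (piv_shift_eq_remainder (gamma beta) (fun k => Nat.iter k (Tb beta) x));
    [apply greedy_bounded, Hx| |].
  - intros k. destruct (iter_Tb_range k x Hx). lra.
  - intros k. unfold greedy. rewrite INR_digit by apply iter_Tb_range, Hx.
    simpl. apply Tb_decomp.
Qed.

Lemma piv_greedy x : 0 <= x < 1 -> piv beta (greedy beta x) = x.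
Proof. intros Hx. rewrite <- (shift_0 (greedy beta x)). apply piv_shift_greedy, Hx. Qed.

Lemma lt_piv_of_greedy_lex_lt x w : 0 <= x < 1 -> bounded_by (gamma beta) w ->
  lex_lt (greedy beta x) w -> x < piv beta w.
Proof.
  intros Hx Hw [n [Hn Ln]]. rewrite <- (piv_greedy x Hx) at 1.
  apply (piv_lt_of_first_diff (gamma beta) _ _ n); auto using greedy_bounded.
  rewrite piv_shift_greedy by exact Hx. apply iter_Tb_range, Hx.
Qed.

Lemma greedy_zero_after x k i : Nat.iter k (Tb beta) x = 0 -> greedy beta x (i + k)%nat = 0%nat.
Proof.
  intros Z. unfold greedy. rewrite Nat.iter_add, Z, iter_Tb_0, Rmult_0_r.
  change 0 with (IZR 0). rewrite flr_IZR. reflexivity.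
Qed.

Lemma brat_len_of_iter_Tb_zero r m : 0 < r < 1 -> Nat.iter m (Tb beta) r = 0 ->
  (forall k, (k < m)%nat -> Nat.iter k (Tb beta) r <> 0) -> brat_len beta r m.
Proof.
  intros Hr Hm Hmin.
  assert (Hm1 : (1 <= m)%nat) by (destruct m; [simpl in Hm; lra|lia]).
  split; [exact Hr|split; [exact Hm1|split]].
  - unfold greedy. set (y := Nat.iter (m - 1) (Tb beta) r).
    assert (Hy : y <> 0) by (apply Hmin; lia).
    assert (Hy0 : 0 <= y) by (apply iter_Tb_range; lra).
    assert (Ty : Tb beta y = 0).
    { unfold y. rewrite <- Nat.iter_succ. replace (S (m - 1)) with m by lia. exact Hm. }
    unfold Tb in Ty. intros Z.
    assert (F0 : flr (beta * y) = 0%Z) by (assert (F := flr_nonneg (beta * y) ltac:(nra)); lia).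
    rewrite F0 in Ty. simpl in Ty. nra.
  - intros i Hi. replace i with ((i - m) + m)%nat by lia. apply greedy_zero_after, Hm.
Qed.

(** * Quasi-greedy expansions *)

Fixpoint qg_rem (x : R) (n : nat) : R :=
  match n with
  | O => x
  | S n => beta * qg_rem x n - IZR (ceil_pred (beta * qg_rem x n))
  end.

Definition quasi_greedy (x : R) : digseq := fun n => Z.to_nat (ceil_pred (beta * qg_rem x n)).

Lemma qg_rem_range x n : 0 < x <= 1 -> 0 < qg_rem x n <= 1.
Proof.
  intros Hx. induction n as [|n IH]; simpl; [exact Hx|].
  destruct (ceil_pred_spec (beta * qg_rem x n)). lra.
Qed.

Lemma INR_quasi_greedy x n : 0 < x <= 1 ->
  INR (quasi_greedy x n) = IZR (ceil_pred (beta * qg_rem x n)).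
Proof.
  intros Hx. unfold quasi_greedy. rewrite INR_IZR_INZ, Z2Nat.id; [reflexivity|].
  apply ceil_pred_nonneg. destruct (qg_rem_range x n Hx). nra.
Qed.

Lemma quasi_greedy_bounded x : 0 < x <= 1 -> bounded_by (gamma beta) (quasi_greedy x).
Proof.
  intros Hx n. destruct gamma_spec as [_ [_ G]]. apply G.
  rewrite INR_quasi_greedy by exact Hx.
  destruct (ceil_pred_spec (beta * qg_rem x n)), (qg_rem_range x n Hx). nra.
Qed.

Lemma piv_shift_quasi_greedy x n : 0 < x <= 1 ->
  piv beta (shift n (quasi_greedy x)) = qg_rem x n.
Proof.
  intros Hx. apply (piv_shift_eq_remainder (gamma beta) (qg_rem x));
    [apply quasi_greedy_bounded, Hx| |].
  - intros k. destruct (qg_rem_range x k Hx). lra.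
  - intros k. rewrite INR_quasi_greedy by exact Hx. simpl. ring.
Qed.

Lemma shift_quasi_greedy x k : shift k (quasi_greedy x) = quasi_greedy (qg_rem x k).
Proof.
  assert (Hrem : forall n, qg_rem (qg_rem x k) n = qg_rem x (n + k)).
  { induction n as [|n IH]; simpl; [reflexivity|]. rewrite IH. reflexivity. }
  apply functional_extensionality. intros i. unfold shift, quasi_greedy. rewrite Hrem. reflexivity.
Qed.

Lemma qg_candidate_quasi_greedy_1 : qg_candidate beta (quasi_greedy 1).
Proof.
  assert (H1 : 0 < 1 <= 1) by lra.
  split; [exact (quasi_greedy_bounded 1 H1)|split].
  - intros N. apply NNPP. intros Hno.
    assert (Hpos := qg_rem_range 1 N H1). rewrite <- (piv_shift_quasi_greedy 1 N H1) in Hpos.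
    rewrite piv_zero in Hpos; [lra|]. intros i. unfold shift.
    destruct (Nat.eq_dec (quasi_greedy 1 (i + N)%nat) 0%nat) as [E|E]; [exact E|].
    exfalso. apply Hno. exists (i + N)%nat. split; [lia|exact E].
  - assert (E := piv_shift_quasi_greedy 1 0 H1). rewrite shift_0 in E.
    assert (X := Series_correct _ (ex_series_piv _ _ (quasi_greedy_bounded 1 H1))).
    unfold piv in E. rewrite E in X. exact X.
Qed.

Lemma quasi_greedy_1_max w : qg_candidate beta w -> ~ lex_lt (quasi_greedy 1) w.
Proof.
  intros [Wb [Wnz Ws]] [n [Hn Ln]].
  assert (H1 : 0 < 1 <= 1) by lra.
  assert (Pw : piv beta w = 1) by (apply is_series_unique; exact Ws).
  assert (Pq := piv_shift_quasi_greedy 1 0 H1). rewrite shift_0 in Pq. simpl in Pq.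
  assert (P := piv_diff_prefix _ n _ _ (quasi_greedy_bounded 1 H1) Wb Hn).
  rewrite Pw, Pq, piv_shift_quasi_greedy in P by exact H1.
  assert (Hp := beta_pow_pos n).
  assert (E1 : piv beta (shift n w) = qg_rem 1 n).
  { assert (Z0 : (qg_rem 1 n - piv beta (shift n w)) / beta ^ n = 0) by lra.
    unfold Rdiv in Z0. apply Rmult_integral in Z0 as [Z0|Z0]; [lra|].
    exfalso. exact (Rinv_neq_0_compat _ (Rgt_not_eq _ _ Hp) Z0). }
  rewrite (piv_cons _ _ (bounded_by_shift _ _ _ Wb)), shift_shift in E1.
  unfold shift at 1 in E1. simpl in E1.
  assert (Pos := piv_tail_pos _ w (S n) Wb Wnz).
  assert (Hd : INR (quasi_greedy 1 n) + 1 <= INR (w n)) by (rewrite <- S_INR; apply le_INR; lia).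
  rewrite INR_quasi_greedy in Hd by exact H1.
  destruct (ceil_pred_spec (beta * qg_rem 1 n)).
  assert (Hv : beta * qg_rem 1 n = INR (w n) + piv beta (shift (S n) w))
    by (rewrite <- E1; field; lra).
  lra.
Qed.

Lemma quasi_greedy_lex_mono x y : 0 < y <= x -> x <= 1 ->
  ~ lex_lt (quasi_greedy x) (quasi_greedy y).
Proof.
  intros Hy Hx [p [Hp Lp]].
  assert (Hxr : 0 < x <= 1) by lra. assert (Hyr : 0 < y <= 1) by lra.
  assert (Hrem : forall i, (i <= p)%nat -> qg_rem y i <= qg_rem x i).
  { induction i as [|i IH]; intros Hi; simpl; [lra|].
    assert (E := Hp i ltac:(lia)). unfold quasi_greedy in E.
    destruct (qg_rem_range x i Hxr), (qg_rem_range y i Hyr).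
    assert (Dx := ceil_pred_nonneg (beta * qg_rem x i) ltac:(nra)).
    assert (Dy := ceil_pred_nonneg (beta * qg_rem y i) ltac:(nra)).
    apply Z2Nat.inj in E; [|exact Dx|exact Dy].
    rewrite E. specialize (IH ltac:(lia)). nra. }
  specialize (Hrem p (le_n _)).
  assert (M := ceil_pred_le (beta * qg_rem y p) (beta * qg_rem x p) ltac:(nra)).
  unfold quasi_greedy in Lp. lia.
Qed.

(** * Bifurcation parameters *)

(* [x] lies in its own survivor set [K(x)]. *)
Definition Eset (x : R) : Prop := 0 < x < 1 /\ forall k, ~ (0 < Nat.iter k (Tb beta) x < x).

Lemma Ubif_of_Eset x : Eset x -> Ubif beta x.
Proof.
  intros [[H0 H1] HE]. split; [lra|]. right; right. split; [lra|].
  intros d Hd. set (e := Rmin d (1 - x)).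
  assert (He : 0 < e <= d /\ e <= 1 - x)
    by (split; [split; [apply Rmin_pos|apply Rmin_l]|apply Rmin_r]; lra).
  exists (x + e / 2). split; [lra|]. split; [rewrite Rabs_pos_eq; lra|].
  intros HK. assert (Kx : Kset beta x x) by (right; right; split; [lra|split; [lra|exact HE]]).
  apply HK in Kx as [[E _]|[[E _]|[_ [_ K]]]]; [lra|lra|].
  apply (K 0%nat). simpl. lra.
Qed.

Lemma Ubif_0 : Ubif beta 0.
Proof. split; [lra|]. left. reflexivity. Qed.

Lemma Eset_inv_beta_pow p : (1 <= p)%nat -> Eset (/ beta ^ p).
Proof.
  intros Hp. assert (Hpos := beta_pow_pos p). assert (Hinv := Rinv_0_lt_compat _ Hpos).
  assert (Hbelow : forall k, (k < p)%nat -> Nat.iter k (Tb beta) 0 + beta ^ k * / beta ^ p < 1).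
  { intros k Hk. rewrite iter_Tb_0, Rplus_0_l.
    assert (Hlt : beta ^ k < beta ^ p) by (apply Rlt_pow; [lra|lia]).
    apply (Rmult_lt_reg_r (beta ^ p)); [lra|]. rewrite Rmult_assoc, Rinv_l; lra. }
  assert (Hone : Nat.iter p (Tb beta) 0 + beta ^ p * / beta ^ p = 1)
    by (rewrite iter_Tb_0, Rinv_r; lra).
  destruct (iter_Tb_hit_zero 0 (/ beta ^ p) p ltac:(lra) (Rlt_le _ _ Hinv) Hp Hbelow Hone)
    as [Horbit Hhit].
  rewrite Rplus_0_l in Horbit, Hhit.
  assert (Hlt1 := Hbelow 0%nat ltac:(lia)). simpl in Hlt1.
  split; [split; lra|].
  intros k. destruct (lt_dec k p) as [Hk|Hk].
  - rewrite Horbit, iter_Tb_0 by exact Hk. assert (H1 := beta_pow_ge_1 k). nra.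
  - rewrite (iter_Tb_zero_after p) by (lia || exact Hhit). lra.
Qed.

Lemma Eset_le_iter r k : Eset r -> Nat.iter k (Tb beta) r <> 0 -> r <= Nat.iter k (Tb beta) r.
Proof.
  intros [Hr HE] Hk. assert (H0 := iter_Tb_range k r ltac:(lra)).
  specialize (HE k). apply Rnot_lt_le. intros Hlt. apply HE. lra.
Qed.

(* Left of [r], each [T^i] with [i <= k] stays on the branch of [T^i r]. *)
Lemma Eset_closed_left r : 0 < r < 1 ->
  (forall eta, 0 < eta -> exists u, Eset u /\ r - eta < u <= r) -> Eset r.
Proof.
  intros Hr Happ. split; [exact Hr|]. intros k [Hk0 Hkr].
  assert (Hpos : forall i, (i <= k)%nat -> 0 < Nat.iter i (Tb beta) r).
  { intros i Hi. destruct (iter_Tb_range i r ltac:(lra)) as [H0 _].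
    destruct H0 as [H0|H0]; [exact H0|].
    rewrite (iter_Tb_zero_after i k) in Hk0 by auto. lra. }
  set (f i := Nat.iter i (Tb beta) r / beta ^ i).
  destruct (argmin_nat f k) as [n [Hn [Hmin _]]].
  assert (Hfn : 0 < f n) by (apply Rdiv_lt_0_compat; [apply Hpos, Hn|apply beta_pow_pos]).
  destruct (Happ (f n) Hfn) as [u [[_ Eu] [Hu1 Hu2]]].
  assert (Hbranch : forall i, (i <= k)%nat -> 0 < Nat.iter i (Tb beta) r + beta ^ i * (u - r)).
  { intros i Hi. specialize (Hmin i Hi). unfold f in Hmin.
    assert (Hp := beta_pow_pos i).
    apply (Rmult_le_compat_l (beta ^ i)) in Hmin; [|lra].
    replace (beta ^ i * (Nat.iter i (Tb beta) r / beta ^ i)) with (Nat.iter i (Tb beta) r)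
      in Hmin by (field; lra).
    unfold f in Hu1. nra. }
  assert (Hku : Nat.iter k (Tb beta) u = Nat.iter k (Tb beta) r + beta ^ k * (u - r)).
  { replace u with (r + (u - r)) at 1 by ring. apply iter_Tb_affine.
    intros i Hi. specialize (Hbranch i ltac:(lia)).
    destruct (iter_Tb_range i r ltac:(lra)). assert (Hp := beta_pow_pos i). nra. }
  apply (Eu k). rewrite Hku. split; [apply Hbranch; lia|].
  assert (H1 := beta_pow_ge_1 k). nra.
Qed.

(* The first [n] with [(1 - T^n r) / beta^n] minimal is the first time the orbit of
   [r + (1 - T^n r) / beta^n] reaches a discontinuity, where it is sent to 0. *)
Lemma Eset_right_approx r : Eset r -> (forall n, Nat.iter n (Tb beta) r <> 0) ->
  forall eps, 0 < eps -> exists z, Eset z /\ r < z < r + eps.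
Proof.
  intros Er Hnz eps He. assert (Hr := proj1 Er).
  set (g n := (1 - Nat.iter n (Tb beta) r) / beta ^ n).
  assert (Hg : forall n, 0 < g n).
  { intros n. apply Rdiv_lt_0_compat; [|apply beta_pow_pos].
    destruct (iter_Tb_range n r ltac:(lra)). lra. }
  destruct (inv_beta_pow_small (Rmin eps (1 - r))) as [N HN]; [apply Rmin_pos; lra|].
  assert (Hm := Rmin_l eps (1 - r)). assert (Hm' := Rmin_r eps (1 - r)).
  destruct (argmin_nat g N) as [n [Hn [Hle Hlt]]].
  assert (HgN : g N <= / beta ^ N).
  { unfold g, Rdiv. rewrite <- (Rmult_1_l (/ beta ^ N)) at 2.
    apply Rmult_le_compat_r; [left; apply Rinv_0_lt_compat, beta_pow_pos|].
    destruct (iter_Tb_range N r ltac:(lra)). lra. }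
  assert (Hgn : g n < Rmin eps (1 - r)) by (specialize (Hle N (le_n _)); lra).
  assert (Hn1 : (1 <= n)%nat).
  { destruct n; [|lia]. exfalso. unfold g in Hgn. simpl in Hgn. lra. }
  assert (Hbelow : forall k, (k < n)%nat -> Nat.iter k (Tb beta) r + beta ^ k * g n < 1).
  { intros k Hk. specialize (Hlt k Hk). assert (Hp := beta_pow_pos k).
    apply (Rmult_lt_compat_l (beta ^ k)) in Hlt; [|exact Hp].
    unfold g at 2 in Hlt. field_simplify in Hlt; lra. }
  assert (Hone : Nat.iter n (Tb beta) r + beta ^ n * g n = 1).
  { unfold g. field. apply Rgt_not_eq, beta_pow_pos. }
  destruct (iter_Tb_hit_zero r (g n) n ltac:(lra) (Rlt_le _ _ (Hg n)) Hn1 Hbelow Hone)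
    as [Horbit Hhit].
  exists (r + g n). specialize (Hg n). split; [split; [split; lra|]|lra].
  intros k. destruct (lt_dec k n) as [Hk|Hk].
  - rewrite Horbit by exact Hk.
    assert (Hle_r : r <= Nat.iter k (Tb beta) r) by (apply Eset_le_iter; auto).
    assert (H1 := beta_pow_ge_1 k). nra.
  - rewrite (iter_Tb_zero_after n) by (lia || exact Hhit). lra.
Qed.

Lemma greedy_lex_le_shifts r : Eset r -> lex_le_shifts (greedy beta r).
Proof.
  intros Er k. assert (Hr : 0 <= r < 1) by (destruct Er; lra).
  destruct (Req_dec (Nat.iter k (Tb beta) r) 0) as [Z|NZ].
  - right. intros i. apply greedy_zero_after, Z.
  - left. apply lex_le_of_not_lt. intros L.
    rewrite shift_greedy in L. apply lt_piv_of_greedy_lex_lt in L;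
      [|apply iter_Tb_range, Hr|apply greedy_bounded, Hr].
    rewrite piv_greedy in L by exact Hr.
    assert (Hle := Eset_le_iter r k Er NZ). lra.
Qed.

(** * The quasi-greedy expansion of 1 and Parry's condition *)

Section Alpha.

Variable a : digseq.
Hypothesis alpha_a : is_alpha beta a.

Lemma alpha_bounded : bounded_by (gamma beta) a.
Proof. exact (proj1 (proj1 alpha_a)). Qed.

Lemma alpha_nonzero_tail N : exists n, (N <= n)%nat /\ a n <> 0%nat.
Proof. exact (proj1 (proj2 (proj1 alpha_a)) N). Qed.

Lemma piv_alpha : piv beta a = 1.
Proof. apply is_series_unique. exact (proj2 (proj2 (proj1 alpha_a))). Qed.

Lemma alpha_eq_quasi_greedy : a = quasi_greedy 1.
Proof.
  destruct alpha_a as [Ha Hmax].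
  destruct (Hmax _ qg_candidate_quasi_greedy_1) as [L|E]; [|symmetry; exact E].
  exfalso. exact (quasi_greedy_1_max a Ha L).
Qed.

Lemma alpha_first_digit : a 0%nat = gamma beta.
Proof.
  rewrite alpha_eq_quasi_greedy. unfold quasi_greedy. simpl.
  destruct gamma_spec as [G1 [G2 _]].
  rewrite (ceil_pred_unique (Z.of_nat (gamma beta))), Nat2Z.id; [reflexivity|].
  rewrite <- INR_IZR_INZ. lra.
Qed.

Lemma alpha_not_lt_shift n : ~ lex_lt a (shift n a).
Proof.
  rewrite alpha_eq_quasi_greedy, shift_quasi_greedy.
  destruct (qg_rem_range 1 n ltac:(lra)). apply quasi_greedy_lex_mono; lra.
Qed.

Lemma Sigma_shift w k : Sigma beta a w -> Sigma beta a (shift k w).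
Proof.
  intros [Hb Hl]. split; [exact (bounded_by_shift _ k _ Hb)|].
  intros j. rewrite shift_shift. apply Hl.
Qed.

(* Comparing [shift k w] with [a] at their first difference [n]. *)
Lemma Sigma_piv_shift_bound w M : Sigma beta a w -> (forall j, piv beta (shift j w) <= M) ->
  forall k, exists n P, 0 < P /\ piv beta (shift k w) <= 1 + (M - 1 - P) / beta ^ S n.
Proof.
  intros [Wb Wl] HM k. destruct (Wl k) as [n [Hn Ln]].
  exists n, (piv beta (shift (S n) a)).
  split; [exact (piv_tail_pos _ a (S n) alpha_bounded alpha_nonzero_tail)|].
  assert (P := piv_diff_prefix _ n _ _ (bounded_by_shift _ k _ Wb) alpha_bounded Hn).
  rewrite piv_alpha,
    (piv_cons _ (shift n (shift k w)) (bounded_by_shift _ n _ (bounded_by_shift _ k _ Wb))),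
    (piv_cons _ (shift n a) (bounded_by_shift _ n _ alpha_bounded)), !shift_shift in P.
  change (shift (n + k) w 0%nat) with (w (n + k)%nat) in P.
  change (shift n a 0%nat) with (a n) in P.
  change (1 + (n + k))%nat with (S (n + k)) in P. change (1 + n)%nat with (S n) in P.
  unfold shift in Ln.
  assert (Hd : INR (w (n + k)%nat) + 1 <= INR (a n)) by (rewrite <- S_INR; apply le_INR; lia).
  specialize (HM (S (n + k))).
  assert (Hp := beta_pow_pos n).
  enough (piv beta (shift k w) - 1 <= (M - 1 - piv beta (shift (S n) a)) / beta ^ S n) by lra.
  rewrite P. simpl. unfold Rdiv.
  rewrite <- Rmult_minus_distr_r, Rmult_assoc, <- Rinv_mult.
  apply Rmult_le_compat_r; [left; apply Rinv_0_lt_compat; nra|lra].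
Qed.

Lemma Sigma_piv_shift_lt_1 w : Sigma beta a w -> forall k, piv beta (shift k w) < 1.
Proof.
  intros Hw.
  set (V y := exists k, y = piv beta (shift k w)).
  destruct (completeness V) as [M [HMu HMl]].
  { exists (piv beta (fun _ => gamma beta)). intros y [k ->].
    apply (piv_le (gamma beta)); intros i; [lia|apply (proj1 Hw)]. }
  { exists (piv beta (shift 0 w)), 0%nat. reflexivity. }
  assert (HM : forall j, piv beta (shift j w) <= M)
    by (intros j; apply HMu; exists j; reflexivity).
  assert (M1 : M <= 1).
  { apply Rnot_lt_le. intros M1.
    enough (M <= 1 + (M - 1) / beta) by
      (assert (Hd : (M - 1) / beta < M - 1) by
         (apply (Rmult_lt_reg_l beta); [lra|]; field_simplify; nra); lra).
    apply HMl. intros y [k ->].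
    destruct (Sigma_piv_shift_bound w M Hw HM k) as [n [P [HP Hk]]].
    assert (Hb := beta_pow_ge_1 n). assert (Hbn : beta <= beta ^ S n) by (simpl; nra).
    enough ((M - 1 - P) / beta ^ S n <= (M - 1) / beta) by lra.
    unfold Rdiv. apply Rle_trans with ((M - 1) * / beta ^ S n).
    - apply Rmult_le_compat_r; [left; apply Rinv_0_lt_compat; lra|lra].
    - apply Rmult_le_compat_l; [lra|apply Rinv_le_contravar; lra]. }
  intros k. destruct (Sigma_piv_shift_bound w M Hw HM k) as [n [P [HP Hk]]].
  assert (Hp := beta_pow_pos (S n)).
  enough ((M - 1 - P) / beta ^ S n < 0) by lra.
  apply Rdiv_neg_pos; lra.
Qed.

Lemma iter_Tb_piv_Sigma w k : Sigma beta a w ->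
  Nat.iter k (Tb beta) (piv beta w) = piv beta (shift k w).
Proof.
  intros Hw. induction k as [|k IH]; [rewrite shift_0; reflexivity|].
  rewrite Nat.iter_succ, IH.
  set (u := shift k w). assert (Hu : Sigma beta a u) by (apply Sigma_shift, Hw).
  assert (E := piv_cons _ u (proj1 Hu)).
  assert (L := Sigma_piv_shift_lt_1 u Hu 1).
  assert (N := piv_nonneg _ _ (bounded_by_shift _ 1 _ (proj1 Hu))).
  assert (Hval : beta * piv beta u = INR (u 0%nat) + piv beta (shift 1 u))
    by (rewrite E; field; lra).
  assert (F : flr (beta * piv beta u) = Z.of_nat (u 0%nat))
    by (apply flr_unique; rewrite <- INR_IZR_INZ; lra).
  unfold Tb. rewrite F, <- INR_IZR_INZ, Hval.
  unfold u. rewrite shift_shift. change (1 + k)%nat with (S k). ring.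
Qed.

Lemma Sigma_piv_lt w w' : Sigma beta a w -> bounded_by (gamma beta) w' ->
  lex_lt w w' -> piv beta w < piv beta w'.
Proof.
  intros Hw Hw' [n [Hn Ln]].
  apply (piv_lt_of_first_diff (gamma beta) w w' n (proj1 Hw) Hw' Hn Ln).
  apply Sigma_piv_shift_lt_1, Hw.
Qed.

Lemma Eset_piv_of_lex_le_shifts y : Sigma beta a y -> lex_le_shifts y ->
  (exists i, y i <> 0%nat) -> Eset (piv beta y).
Proof.
  intros Hy Hmin [i Hi]. split; [split|].
  - exact (piv_pos _ _ i (proj1 Hy) Hi).
  - rewrite <- (shift_0 y). apply Sigma_piv_shift_lt_1, Hy.
  - intros k. rewrite iter_Tb_piv_Sigma by exact Hy.
    destruct (Hmin k) as [[H|H]|H].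
    + assert (Hlt := Sigma_piv_lt _ _ Hy (bounded_by_shift _ k _ (proj1 Hy)) H). lra.
    + rewrite <- H. lra.
    + rewrite piv_zero by exact H. lra.
Qed.

Lemma Eset_piv_above r y : 0 <= r < 1 -> Sigma beta a y -> lex_le_shifts y ->
  lex_lt (greedy beta r) y -> Eset (piv beta y) /\ r < piv beta y.
Proof.
  intros Hr Hy Hmin Hlt. split.
  - exact (Eset_piv_of_lex_le_shifts y Hy Hmin (lex_lt_nonzero _ _ Hlt)).
  - exact (lt_piv_of_greedy_lex_lt r y Hr (proj1 Hy) Hlt).
Qed.

(** * The procedure defining [r^*] *)

(* A digit [gamma beta] at [j - 1] would give [a <= shift j x < shift 1 a]. *)
Lemma bump_bounded x j : bounded_by (gamma beta) x -> (1 <= j)%nat ->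
  lex_le a (shift j x) -> ~ lex_le a (shift (j - 1) x) -> bounded_by (gamma beta) (bump x j).
Proof.
  intros Hx Hj Hja Hja' i.
  destruct (lt_eq_lt_dec i (j - 1)) as [[Hi| ->]|Hi].
  - rewrite bump_before by exact Hi. apply Hx.
  - rewrite bump_at by exact Hj.
    enough (x (j - 1)%nat <> gamma beta) by (specialize (Hx (j - 1)%nat); lia).
    intros Hg. destruct (lex_lt_of_not_le _ _ Hja') as [[|p] [Hp Lp]]; unfold shift in Hp, Lp.
    + simpl in Lp. assert (H0 := alpha_bounded 0%nat). lia.
    + apply (alpha_not_lt_shift 1), (lex_le_lt_trans _ _ _ Hja).
      exists p. unfold shift. split.
      * intros i Hi. replace (i + j)%nat with (S i + (j - 1))%nat by lia.
        rewrite Hp by lia. f_equal. lia.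
      * replace (p + j)%nat with (S p + (j - 1))%nat by lia.
        replace (p + 1)%nat with (S p) by lia. exact Lp.
  - rewrite bump_after by lia. lia.
Qed.

Lemma bump_lt_alpha x j : lex_lt x a -> (1 <= j)%nat -> lex_le a (shift j x) ->
  lex_lt (bump x j) a.
Proof.
  intros [p [Hp Lp]] Hj Hja.
  destruct (lt_eq_lt_dec p (j - 1)) as [[Hpj| ->]|Hpj].
  - exists p. rewrite bump_before by exact Hpj. split; [|exact Lp].
    intros i Hi. rewrite bump_before by lia. apply Hp, Hi.
  - destruct (Nat.eq_dec (S (x (j - 1)%nat)) (a (j - 1)%nat)) as [E|E].
    + destruct (exists_least (fun i => (j <= i)%nat /\ a i <> 0%nat)) as [i0 [[Hi0 Ai0] Hm0]];
        [exact (alpha_nonzero_tail j)|].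
      exists i0. rewrite bump_after by lia. split; [|lia].
      intros i Hi. destruct (lt_eq_lt_dec i (j - 1)) as [[H| ->]|H].
      * rewrite bump_before by exact H. apply Hp, H.
      * rewrite bump_at by exact Hj. exact E.
      * rewrite bump_after by lia.
        destruct (Nat.eq_dec (a i) 0%nat) as [Z|Z]; [auto|].
        exfalso. apply (Hm0 i Hi). split; [lia|exact Z].
    + exists (j - 1)%nat. rewrite bump_at by exact Hj. split; [|lia].
      intros i Hi. rewrite bump_before by exact Hi. apply Hp, Hi.
  - exfalso. apply (alpha_not_lt_shift j), (lex_le_lt_trans _ _ _ Hja).
    exists (p - j)%nat. unfold shift. split.
    + intros i Hi. apply Hp. lia.
    + replace (p - j + j)%nat with p by lia. exact Lp.
Qed.

Lemma rstep_bump x : bounded_by (gamma beta) x -> lex_lt x a -> ~ Sigma beta a x ->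
  exists j, (1 <= j)%nat /\ rstep beta a x (bump x j) /\ bounded_by (gamma beta) (bump x j) /\
    lex_lt (bump x j) a /\ exists i, x (i + j)%nat <> 0%nat.
Proof.
  intros Hx Hxa HS.
  destruct (exists_least (fun k => lex_le a (shift k x))) as [j [Hj Hmin]].
  { apply NNPP. intros Hno. apply HS. split; [exact Hx|].
    intros k. apply lex_lt_of_not_le. intros H. apply Hno. exists k. exact H. }
  assert (Hj1 : (1 <= j)%nat).
  { destruct j; [|lia]. rewrite shift_0 in Hj. contradiction (lex_lt_not_le _ _ Hxa Hj). }
  exists j. split; [exact Hj1|]. split.
  { split; [exact HS|]. exists j.
    split; [exact Hj1|split; [exact Hj|split; [exact Hmin|reflexivity]]]. }
  split; [apply bump_bounded; auto; apply Hmin; lia|].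
  split; [exact (bump_lt_alpha x j Hxa Hj1 Hj)|].
  apply (lex_le_nonzero _ _ Hj).
  destruct (alpha_nonzero_tail 0) as [n [_ Hn]]. exists n. exact Hn.
Qed.

(* Every step keeps the sequence below [a], above [b] and below its nonzero shifts; after the
   first step the sequence vanishes from the bumped index on, and that index decreases. *)
Lemma rproc_terminates b x : bounded_by (gamma beta) x -> lex_lt x a -> lex_le_shifts x ->
  lex_lt b x -> exists y, rproc beta a x y /\ Sigma beta a y /\ lex_le_shifts y /\ lex_lt b y.
Proof.
  pose (Inv x := bounded_by (gamma beta) x /\ lex_lt x a /\ lex_le_shifts x /\ lex_lt b x).
  pose (Goal x := exists y, rproc beta a x y /\ Sigma beta a y /\ lex_le_shifts y /\ lex_lt b y).
  assert (Hstep : forall x, Inv x -> ~ Sigma beta a x -> exists j,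
    (exists i, x (i + j)%nat <> 0%nat) /\ (forall i, (j <= i)%nat -> bump x j i = 0%nat) /\
    Inv (bump x j) /\ (Goal (bump x j) -> Goal x)).
  { intros y [Hy [Hya [Hymin Hby]]] HS.
    destruct (rstep_bump y Hy Hya HS) as [j [Hj [Hst [Hbd [Hlt Hnz]]]]].
    exists j. split; [exact Hnz|]. split; [intros i Hi; apply bump_after; lia|].
    split; [split; [exact Hbd|split; [exact Hlt|split]]|].
    - apply lex_le_shifts_bump; assumption.
    - exact (lex_lt_trans _ _ _ Hby (lex_lt_bump y j Hj)).
    - intros [z [Hz Hrest]]. exists z. split; [exact (rproc_step _ _ _ _ _ Hst Hz)|exact Hrest]. }
  assert (Hfin : forall N x, (forall i, (N <= i)%nat -> x i = 0%nat) -> Inv x -> Goal x).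
  { intros N. induction N as [N IH] using (well_founded_induction lt_wf). intros y Hz Hy.
    destruct (classic (Sigma beta a y)) as [HS|HS];
      [exists y; split; [apply rproc_done|]; unfold Inv in Hy; tauto|].
    destruct (Hstep y Hy HS) as [j [[i Hi] [Hzj [Hj Hback]]]].
    apply Hback, (IH j); [|exact Hzj|exact Hj].
    destruct (lt_dec j N) as [Hlt|Hge]; [exact Hlt|]. exfalso. apply Hi, Hz. lia. }
  intros Hx Hxa Hmin Hbx. assert (Hinv : Inv x) by (repeat split; assumption).
  destruct (classic (Sigma beta a x)) as [HS|HS];
    [exists x; split; [apply rproc_done|]; tauto|].
  destruct (Hstep x Hinv HS) as [j [_ [Hzj [Hj Hback]]]].
  exact (Hback (Hfin j _ Hzj Hj)).
Qed.

Lemma is_rstar_exists r m : brat_len beta r m -> Eset r ->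
  exists s, is_rstar beta a r s /\ (s = 1 \/ (Eset s /\ r < s)).
Proof.
  intros Hm Er. assert (Hr : 0 <= r < 1) by (destruct Er; lra).
  pose proof Hm as [_ [Hm1 [Hlast Htail]]].
  set (b := greedy beta r) in *.
  assert (Hbd : bounded_by (gamma beta) (periodize m b)) by (intros i; apply greedy_bounded, Hr).
  assert (Hmin := lex_le_shifts_periodize m b Hm1 Hlast Htail (greedy_lex_le_shifts r Er)).
  assert (Hgt := lex_lt_periodize m b Hm1 Hlast Htail).
  destruct (classic (Sigma beta a (periodize m b))) as [HS|HS].
  { exists (piv beta (periodize m b)). split.
    - exists m. split; [exact Hm|]. left. split; [exact HS|reflexivity].
    - right. exact (Eset_piv_above r _ Hr HS Hmin Hgt). }
  destruct (Nat.eq_dec (b 0%nat) (gamma beta)) as [Hg|Hg].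
  { exists 1. split; [|left; reflexivity]. exists m. split; [exact Hm|]. right; left. auto. }
  assert (Hb0 : (b 0%nat < gamma beta)%nat)
    by (assert (H0 := greedy_bounded r Hr 0%nat); fold b in H0; lia).
  assert (Hlt : lex_lt (periodize m b) a).
  { exists 0%nat. split; [intros; lia|]. unfold periodize.
    rewrite Nat.Div0.mod_0_l, alpha_first_digit. exact Hb0. }
  destruct (rproc_terminates b _ Hbd Hlt Hmin Hgt) as [y [Hy [HSy [Hymin Hby]]]].
  exists (piv beta y). split.
  - exists m. split; [exact Hm|]. right; right. split; [exact HS|split; [exact Hb0|eauto]].
  - right. exact (Eset_piv_above r y Hr HSy Hymin Hby).
Qed.

End Alpha.

Lemma Eset_sup_below t : 0 < t < 1 ->
  exists r, Eset r /\ r <= t /\ forall u, Eset u -> u <= t -> u <= r.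
Proof.
  intros Ht. set (V u := Eset u /\ u <= t).
  destruct (inv_beta_pow_small t) as [N HN]; [lra|].
  assert (HV : V (/ beta ^ S N)).
  { split; [apply Eset_inv_beta_pow; lia|].
    assert (Hp := beta_pow_pos N). assert (Hle : beta ^ N <= beta ^ S N) by (simpl; nra).
    assert (Hinv : / beta ^ S N <= / beta ^ N) by (apply Rinv_le_contravar; lra). lra. }
  destruct (completeness V) as [r [Hub Hlub]]; [exists t; intros u [_ Hu]; exact Hu|eauto|].
  assert (Hrt : r <= t) by (apply Hlub; intros u [_ Hu]; exact Hu).
  assert (Hr0 : 0 < r).
  { assert (Hle := Hub _ HV). assert (Hp := Rinv_0_lt_compat _ (beta_pow_pos (S N))). lra. }
  exists r. split; [|split; [exact Hrt|intros u Eu Hu; apply Hub; split; assumption]].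
  apply Eset_closed_left; [lra|]. intros eta He. apply NNPP. intros Hno.
  enough (r <= r - eta) by lra.
  apply Hlub. intros u Hu. apply Rnot_lt_le. intros Hlt.
  apply Hno. exists u. split; [exact (proj1 Hu)|split; [exact Hlt|exact (Hub u Hu)]].
Qed.

End BetaExpansions.

Theorem mainTheorem4 (beta : R) (a : digseq) :
  1 < beta -> is_alpha beta a ->
  forall t, 0 <= t < 1 -> ~ Ubif beta t ->
  exists r s, beta_rational beta r /\ is_rstar beta a r s /\
    r < t < s /\ Ubif beta r /\ (Ubif beta s \/ s = 1).
Proof.
  intros Hb Ha t Ht HU.
  assert (Ht0 : 0 < t)
    by (destruct Ht as [[Ht0|<-] _]; [exact Ht0|contradiction (HU (Ubif_0 beta))]).
  destruct (Eset_sup_below beta Hb t) as [r [Er [Hrt Hmax]]]; [lra|].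
  assert (Hrt' : r < t)
    by (destruct Hrt as [Hrt| ->]; [exact Hrt|contradiction (HU (Ubif_of_Eset beta t Er))]).
  assert (Hzero : exists n, Nat.iter n (Tb beta) r = 0).
  { apply NNPP. intros Hno.
    destruct (Eset_right_approx beta Hb r Er (fun n Hn => Hno (ex_intro _ n Hn)) (t - r))
      as [z [Ez Hz]]; [lra|].
    assert (Hle := Hmax z Ez ltac:(lra)). lra. }
  destruct (exists_least _ Hzero) as [m [Hm Hmin]].
  assert (Hrat := brat_len_of_iter_Tb_zero beta Hb r m (proj1 Er) Hm Hmin).
  destruct (is_rstar_exists beta Hb a Ha r m Hrat Er) as [s [Hs Hcases]].
  exists r, s. split; [exists m; exact Hrat|]. split; [exact Hs|].
  destruct Hcases as [->|[Es Hrs]].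
  - split; [lra|]. split; [exact (Ubif_of_Eset beta r Er)|right; reflexivity].
  - assert (Hts : t < s) by (apply Rnot_le_lt; intros Hst; assert (Hle := Hmax s Es Hst); lra).
    split; [lra|]. split; [exact (Ubif_of_Eset beta r Er)|left; exact (Ubif_of_Eset beta s Es)].
Qed.
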